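(* Let $R$ be a Noetherian ring and $\Gamma$ an arbitrary finitely generated group with a word metric. Every surjective $R[\Gamma]$-homomorphism $\phi\colon F\to G$ between properly generated $R[\Gamma]$-modules is boundedly bicontrolled as a homomorphism of $\Gamma$-filtered $R$-modules $s(F,\Sigma_F)\to s(G,\Sigma_G)$, for finite generating sets $\Sigma_F,\Sigma_G$ with respect to which $F$ and $G$ are lean and insular.
   Context: Notation: $S[b]$ is the metric $b$-enlargement of $S\subset\Gamma$, $x[b]$ the $b$-ball about $x$. For a finitely generated $R[\Gamma]$-module $F$ with finite generating set $\Sigma$, $s(F,\Sigma)$ is the $\Gamma$-filtered $R$-module with $F(S)=$ the $R$-submodule generated by $\{s\sigma: s\in S,\sigma\in\Sigma\}$. A $\Gamma$-filtered module is lean if $F(S)\subset\sum_{x\in S}F(x[D])$ for some $D\ge0$ and all $S$, insular if $F(S)\cap F(U)\subset F(S[d]\cap U[d])$ for some $d\ge0$ and all $S,U$. A finitely generated $R[\Gamma]$-module $F$ is properly generated if $s(F,\Sigma)$ is lean and insular for some finite generating set $\Sigma$ (the properties then hold for every finite generating set). A homomorphism $f\colon F\to F'$ of filtered modules is boundedly bicontrolled if there is $b\ge0$ such that for all $S$: $f(F(S))\subset F'(S[b])$ and $f(F)\cap F'(S)\subset f(F(S[b]))$. *)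

From HB Require Import structures.
From mathcomp Require Import all_boot all_order all_algebra.
Set Implicit Arguments. Unset Strict Implicit. Unset Printing Implicit Defensive.
Import GRing.Theory.

Definition left_ideal (R : nzRingType) (I : R -> Prop) : Prop :=
  [/\ I 0%R, (forall x y, I x -> I y -> I (x + y)%R) & (forall r x, I x -> I (r * x)%R)].

Definition noetherian_ring (R : nzRingType) : Prop :=
  forall I : nat -> R -> Prop,
    (forall n, left_ideal (I n)) ->
    (forall n x, I n x -> I n.+1 x) ->
    exists N, forall n, (N <= n)%N -> forall x, I n x <-> I N x.

Section WordMetric.
Local Open Scope group_scope.
Variable gT : groupType.

Definition gprod (l : seq gT) : gT := foldr (fun a b => a * b) 1 l.

Definition letter (gens : seq gT) (a : gT) : Prop :=
  (exists2 s, s \in gens & a = s) \/ (exists2 s, s \in gens & a = s^-1).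

Definition wordlen_le (gens : seq gT) (g : gT) (n : nat) : Prop :=
  exists l : seq gT, [/\ (size l <= n)%N, (forall a, a \in l -> letter gens a) & g = gprod l].

Definition generates_group (gens : seq gT) : Prop :=
  forall g : gT, exists n, wordlen_le gens g n.

(* word metric: d(x,y) = |x^-1 y|;  x[b] is the closed b-ball about x *)
Definition ball_w (gens : seq gT) (x : gT) (b : nat) : gT -> Prop :=
  fun y => wordlen_le gens (x^-1 * y) b.

Definition enlarge (gens : seq gT) (S : gT -> Prop) (b : nat) : gT -> Prop :=
  fun y => exists2 x, S x & ball_w gens x b y.
End WordMetric.

Section Modules.
Local Open Scope ring_scope.
Variables (R : nzRingType) (gT : groupType).

Definition is_RG_action (M : lmodType R) (act : gT -> M -> M) : Prop :=
  [/\ (forall x, act 1%g x = x),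
      (forall g h x, act (g * h)%g x = act g (act h x)),
      (forall g x y, act g (x + y) = act g x + act g y)
    & (forall g (r : R) x, act g (r *: x) = r *: act g x)].

Definition is_RG_hom (M N : lmodType R) (actM : gT -> M -> M) (actN : gT -> N -> N)
  (f : M -> N) : Prop :=
  [/\ (forall x y, f (x + y) = f x + f y),
      (forall (r : R) x, f (r *: x) = r *: f x)
    & (forall g x, f (actM g x) = actN g (f x))].

Definition Rspan (M : lmodType R) (P : M -> Prop) : M -> Prop :=
  fun x => exists l : seq (R * M),
    (forall p, p \in l -> P p.2) /\ x = foldr (fun p acc => p.1 *: p.2 + acc) 0 l.

(* s(F,Sigma)(S) = R-span of { s sigma : s in S, sigma in Sigma } *)
Definition sfilt (M : lmodType R) (act : gT -> M -> M) (Sigma : seq M)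
  (S : gT -> Prop) : M -> Prop :=
  Rspan (fun v => exists s, exists2 sg, sg \in Sigma & S s /\ v = act s sg).

Definition generates_module (M : lmodType R) (act : gT -> M -> M) (Sigma : seq M) : Prop :=
  forall x, sfilt act Sigma (fun _ => True) x.

Definition finsum_of (M : lmodType R) (P : M -> Prop) : M -> Prop :=
  fun x => exists l : seq M, (forall y, y \in l -> P y) /\ x = foldr +%R 0 l.

(* A Gamma-filtered R-module is given by F : (gT -> Prop) -> M -> Prop *)
Definition lean (gens : seq gT) (M : lmodType R) (F : (gT -> Prop) -> M -> Prop) : Prop :=
  exists D : nat, forall S x, F S x ->
    finsum_of (fun y => exists2 s, S s & F (ball_w gens s D) y) x.

Definition insular (gens : seq gT) (M : lmodType R) (F : (gT -> Prop) -> M -> Prop) : Prop :=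
  exists d : nat, forall S U x, F S x -> F U x ->
    F (fun g => enlarge gens S d g /\ enlarge gens U d g) x.

Definition boundedly_bicontrolled (gens : seq gT) (M N : lmodType R)
  (F : (gT -> Prop) -> M -> Prop) (G : (gT -> Prop) -> N -> Prop) (f : M -> N) : Prop :=
  exists b : nat, forall S : gT -> Prop,
    (forall x, F S x -> G (enlarge gens S b) (f x)) /\
    (forall y, (exists x, F (fun _ => True) x /\ y = f x) -> G S y ->
       exists2 x, F (enlarge gens S b) x & f x = y).
End Modules.

(** As [Sigma_F] and [Sigma_G] are finite, there is [b] such that each
    [phi sigma] lies in the [R]-span of the [t tau] with [|t| <= b], and each
    [tau] has a preimage in the [R]-span of the [t sigma] with [|t| <= b].
    Translating by [s] in [S] puts [phi (s sigma) = s (phi sigma)] in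
    [G(S[b])] and gives [s tau] a preimage in [F(S[b])]; [R]-linearity
    extends both facts from generators to all of [F(S)] and [G(S)]. *)

From mathcomp Require Import all_boot all_order all_algebra.
Import GRing.Theory.
Set Implicit Arguments. Unset Strict Implicit.

Local Open Scope ring_scope.

Section Span.
Variable R : nzRingType.

Lemma Rspan_ind (M : lmodType R) (P C : M -> Prop) :
  C 0 -> (forall x y, C x -> C y -> C (x + y)) ->
  (forall r x, C x -> C (r *: x)) -> (forall v, P v -> C v) ->
  forall x, Rspan P x -> C x.
Proof.
move=> C0 CD CZ PC x [l [Pl ->]]; elim: l Pl => [|p l IHl] Pl //=.
apply: CD; first by apply/CZ/PC/Pl/mem_head.
by apply: IHl => q ql; apply: Pl; rewrite inE ql orbT.
Qed.

Lemma Rspan0 (M : lmodType R) (P : M -> Prop) : Rspan P 0.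
Proof. by exists [::]. Qed.

Lemma Rspan_gen (M : lmodType R) (P : M -> Prop) v : P v -> Rspan P v.
Proof.
move=> Pv; exists [:: (1, v)]; split; last by rewrite /= scale1r addr0.
by move=> p; rewrite inE => /eqP ->.
Qed.

Lemma RspanD (M : lmodType R) (P : M -> Prop) x y :
  Rspan P x -> Rspan P y -> Rspan P (x + y).
Proof.
move=> [l1 [P1 ->]] [l2 [P2 ->]]; exists (l1 ++ l2); split.
  by move=> p; rewrite mem_cat => /orP [] ?; [apply: P1 | apply: P2].
elim: l1 {P1} => [|p l IHl] /=; first by rewrite add0r.
by rewrite -addrA -IHl.
Qed.

Lemma RspanZ (M : lmodType R) (P : M -> Prop) (r : R) x :
  Rspan P x -> Rspan P (r *: x).
Proof.
move=> [l [Pl ->]]; exists [seq (r * p.1, p.2) | p <- l]; split.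
  by move=> p /mapP [q ql ->]; exact: Pl q ql.
elim: l {Pl} => [|p l IHl] /=; first by rewrite scaler0.
by rewrite scalerDr IHl scalerA.
Qed.

Lemma Rspan_mono (M : lmodType R) (P Q : M -> Prop) x :
  (forall v, P v -> Q v) -> Rspan P x -> Rspan Q x.
Proof. by move=> PQ [l [Pl ->]]; exists l; split => // p /Pl /PQ. Qed.

Variables (M N : lmodType R) (f : M -> N).
Hypotheses (fD : forall x y, f (x + y) = f x + f y)
           (fZ : forall (r : R) x, f (r *: x) = r *: f x).

Lemma additive_map0 : f 0 = 0.
Proof. by apply: (addrI (f 0)); rewrite -fD !addr0. Qed.

Lemma Rspan_map (P : M -> Prop) (Q : N -> Prop) x :
  (forall v, P v -> Rspan Q (f v)) -> Rspan P x -> Rspan Q (f x).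
Proof.
move=> PQ; apply: (Rspan_ind (C := fun x => Rspan Q (f x))); last exact: PQ.
- by rewrite additive_map0; apply: Rspan0.
- by move=> ? ? ? ?; rewrite fD; apply: RspanD.
- by move=> ? ? ?; rewrite fZ; apply: RspanZ.
Qed.

Lemma Rspan_lift (P : N -> Prop) (Q : M -> Prop) y :
  (forall v, P v -> exists2 x, Rspan Q x & f x = v) -> Rspan P y ->
  exists2 x, Rspan Q x & f x = y.
Proof.
move=> PQ; apply: (Rspan_ind (C := fun y => exists2 x, Rspan Q x & f x = y));
  last exact: PQ.
- by exists 0; [apply: Rspan0 | apply: additive_map0].
- move=> _ _ [x1 Qx1 <-] [x2 Qx2 <-].
  by exists (x1 + x2); [apply: RspanD | apply: fD].
- by move=> r _ [x Qx <-]; exists (r *: x); [apply: RspanZ | apply: fZ].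
Qed.

End Span.

Lemma wordlen_le_mono (gT : groupType) (gens : seq gT) g n m :
  (n <= m)%N -> wordlen_le gens g n -> wordlen_le gens g m.
Proof. by move=> nm [l [sl Ll ->]]; exists l; split => //; apply: leq_trans nm. Qed.

Lemma uniform_bound (A : eqType) (P : nat -> A -> Prop) (s : seq A) :
  (forall b c a, (b <= c)%N -> P b a -> P c a) ->
  (forall a, a \in s -> exists b, P b a) ->
  exists b, forall a, a \in s -> P b a.
Proof.
move=> Pmono; elim: s => [|x s IHs] Ps; first by exists 0%N.
have [b Pb] : exists b, forall a, a \in s -> P b a.
  by apply: IHs => a sa; apply: Ps; rewrite inE sa orbT.
have [c Pc] := Ps x (mem_head _ _).
exists (maxn b c) => a; rewrite inE => /orP [/eqP -> | sa].
  by apply: Pmono Pc; rewrite leq_maxr.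
by apply: Pmono (Pb a sa); rewrite leq_maxl.
Qed.

Section BallSupport.
Variables (R : nzRingType) (gT : groupType) (gens : seq gT).
Variables (M : lmodType R) (act : gT -> M -> M) (Sigma : seq M).

Definition ball_supported (b : nat) : M -> Prop :=
  sfilt act Sigma (fun t => wordlen_le gens t b).

Lemma ball_supported_mono b c z :
  (b <= c)%N -> ball_supported b z -> ball_supported c z.
Proof.
move=> bc; apply: Rspan_mono => _ [s [sg Sig_sg [s_b ->]]].
by exists s; exists sg => //; split => //; apply: wordlen_le_mono s_b.
Qed.

Lemma ball_supported_exists z :
  generates_group gens -> generates_module act Sigma ->
  exists b, ball_supported b z.
Proof.
move=> gen_gens gen_Sigma.
move: (gen_Sigma z); apply: (Rspan_ind (C := fun z => exists b, ball_supported b z)).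
- by exists 0%N; apply: Rspan0.
- move=> x y [b xb] [c yc]; exists (maxn b c); apply: RspanD.
    by apply: ball_supported_mono xb; rewrite leq_maxl.
  by apply: ball_supported_mono yc; rewrite leq_maxr.
- by move=> r x [b xb]; exists b; apply: RspanZ.
- move=> _ [s [sg Sig_sg [_ ->]]]; have [n s_n] := gen_gens s.
  by exists n; apply: Rspan_gen; exists s; exists sg.
Qed.

Lemma act_ball_supported (S : gT -> Prop) s b z :
  is_RG_action act -> S s -> ball_supported b z ->
  sfilt act Sigma (enlarge gens S b) (act s z).
Proof.
move=> [_ actM actD actZ] Ss; apply: Rspan_map => // _ [t [sg Sig_sg [t_b ->]]].
apply: Rspan_gen; exists (s * t)%g; exists sg => //; split; last by rewrite actM.
by exists s => //; rewrite /ball_w mulKg.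
Qed.

End BallSupport.

Section Control.
Variables (R : nzRingType) (gT : groupType) (gens : seq gT).
Variables (M N : lmodType R) (actM : gT -> M -> M) (actN : gT -> N -> N).
Variables (SigmaM : seq M) (SigmaN : seq N) (phi : M -> N).
Hypotheses (actMP : is_RG_action actM) (actNP : is_RG_action actN)
           (phiP : is_RG_hom actM actN phi).

Lemma RG_hom_control (b : nat) (S : gT -> Prop) x :
  (forall sg, sg \in SigmaM -> ball_supported gens actN SigmaN b (phi sg)) ->
  sfilt actM SigmaM S x -> sfilt actN SigmaN (enlarge gens S b) (phi x).
Proof.
case: phiP => phiD phiZ phiA phiSigma.
apply: Rspan_map => // _ [s [sg Sig_sg [Ss ->]]].
by rewrite phiA; apply: act_ball_supported; last exact: phiSigma.
Qed.

Lemma RG_hom_lift_control (b : nat) (S : gT -> Prop) y :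
  (forall t, t \in SigmaN ->
     exists2 x, ball_supported gens actM SigmaM b x & phi x = t) ->
  sfilt actN SigmaN S y ->
  exists2 x, sfilt actM SigmaM (enlarge gens S b) x & phi x = y.
Proof.
case: phiP => phiD phiZ phiA liftSigma.
apply: Rspan_lift => // _ [s [t Sig_t [Ss ->]]].
have [x x_b <-] := liftSigma t Sig_t.
by exists (actM s x); [apply: act_ball_supported | rewrite phiA].
Qed.

End Control.

Theorem lemma3p5 (R : nzRingType) (gT : groupType) (gens : seq gT)
  (M N : lmodType R) (actM : gT -> M -> M) (actN : gT -> N -> N)
  (SigmaM : seq M) (SigmaN : seq N) (phi : M -> N) :
  noetherian_ring R ->
  generates_group gens ->
  is_RG_action actM -> is_RG_action actN ->
  generates_module actM SigmaM -> generates_module actN SigmaN ->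
  lean gens (sfilt actM SigmaM) -> insular gens (sfilt actM SigmaM) ->
  lean gens (sfilt actN SigmaN) -> insular gens (sfilt actN SigmaN) ->
  is_RG_hom actM actN phi ->
  (forall y : N, exists x : M, phi x = y) ->
  boundedly_bicontrolled gens (sfilt actM SigmaM) (sfilt actN SigmaN) phi.
Proof.
move=> _ gen_gens actMP actNP genM genN _ _ _ _ phiP phi_onto.
have [b1 phiSigma] : exists b, forall sg, sg \in SigmaM ->
    ball_supported gens actN SigmaN b (phi sg).
  apply: uniform_bound => [b c z bc | sg _]; first exact: ball_supported_mono.
  exact: ball_supported_exists.
have [b2 liftSigma] : exists b, forall t, t \in SigmaN ->
    exists2 x, ball_supported gens actM SigmaM b x & phi x = t.
  apply: uniform_bound => [b c t bc [x x_b <-] | t _].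
    by exists x => //; apply: ball_supported_mono x_b.
  have [x <-] := phi_onto t; have [b x_b] := ball_supported_exists x gen_gens genM.
  by exists b, x.
exists (maxn b1 b2) => S; split => [x | y _].
  apply: RG_hom_control => // sg /phiSigma.
  by apply: ball_supported_mono; rewrite leq_maxl.
apply: RG_hom_lift_control => // t /liftSigma [x x_b <-].
by exists x => //; apply: ball_supported_mono x_b; rewrite leq_maxr.
Qed.
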